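(* Let $F,G$ be planar forests, and let $S(F,G)$ be the set of bijections $\sigma:\mathrm{Vert}(F)\to\mathrm{Vert}(G)$ such that for all vertices $x,y$ of $F$: (1) if $y\geq_{high}x$ then $\sigma(x)\geq_{left}\sigma(y)$; (2) if $y\geq_{left}x$ then $\sigma(x)\geq_{h,l}\sigma(y)$; (3) if $\sigma(y)\geq_{high}\sigma(x)$ then $x\geq_{left}y$; (4) if $\sigma(y)\geq_{left}\sigma(x)$ then $x\geq_{h,l}y$. Then $\langle F,G\rangle=\mathrm{card}(S(F,G))$.
   Context: Let $K$ be a field. Planar rooted trees have their children linearly ordered left to right; a planar forest is a finite, possibly empty, sequence $t_1\cdots t_n$ of planar rooted trees ($1$ = empty forest); $\mathrm{Vert}(F)$ is the vertex set of $F$. $\mathcal{H}$ is the free associative unital $K$-algebra on planar rooted trees, with basis the planar forests and product concatenation. $B^+(F)$ is the tree obtained by grafting the trees of $F$ (in order) on a new common root. $\varepsilon(F)=\delta_{F,1}$. $\Delta$ is the unique linear map with $\Delta(1)=1\otimes1$, $\Delta(xy)=(x\otimes1)\Delta(y)+\Delta(x)(1\otimes y)-x\otimes y$, $\Delta(B^+(x))=B^+(x)\otimes 1+(\mathrm{Id}\otimes B^+)\Delta(x)$. $\gamma$ is linear with $\gamma(t_1\cdots t_n)=\delta_{t_1,\bullet}t_2\cdots t_n$ ($\bullet$ the one-vertex tree), $\gamma(1)=0$. $\langle-,-\rangle$ is the unique bilinear form on $\mathcal{H}$ with $\langle1,x\rangle=\varepsilon(x)$, $\langle xy,z\rangle=\langle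 y\otimes x,\Delta(z)\rangle$ (with $\langle a\otimes b,c\otimes d\rangle=\langle a,c\rangle\langle b,d\rangle$) and $\langle B^+(x),y\rangle=\langle x,\gamma(y)\rangle$. Orders on vertices of a forest $t_1\cdots t_n$: $s\geq_{high}s'$ iff $s'=s$ or $s'$ is an ancestor of $s$; for $\geq_{high}$-incomparable $s,s'$, $s\geq_{left}s'$ iff $s\in t_i,s'\in t_j$ with $i<j$, or both lie in $t_i$ and $s\geq_{left}s'$ in the forest obtained from $t_i$ by deleting its root (recursively); $s\geq_{h,l}s'$ iff $s\geq_{high}s'$ or $s\geq_{left}s'$ (a total order). *)

From HB Require Import structures.
From mathcomp Require Import all_boot all_order all_algebra.
Set Implicit Arguments. Unset Strict Implicit. Unset Printing Implicit Defensive.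
Import GRing.Theory.
Local Open Scope ring_scope.

Inductive ptree : Type := Node : seq ptree -> ptree.

(** Planar forests = finite sequences of planar trees; [[::]] is the empty forest 1.
    The algebra H has the planar forests as basis, product = concatenation. *)
Definition pforest := seq ptree.

Definition Bplus (F : pforest) : ptree := Node F.

(** Elements of H (x) H given as finite formal sums  sum c * (a (x) b),
    encoded as a list of ((c, a), b). *)
Definition tens (K : fieldType) := seq ((K * pforest) * pforest).

Section Coproduct.
Variable K : fieldType.

(** Delta on a tree t = B^+(x):  Delta(B^+ x) = B^+ x (x) 1 + (Id (x) B^+) Delta(x),
    where Delta on forests is computed via
    Delta(t y) = (t (x) 1) Delta(y) + Delta(t) (1 (x) y) - t (x) y,  Delta(1) = 1 (x) 1. *)
Fixpoint delta_tree (t : ptree) : tens K :=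
  match t with
  | Node F =>
    let fix delta_f (F : pforest) : tens K :=
      match F with
      | [::] => [:: ((1, [::]), [::])]
      | s :: F' =>
          [seq ((p.1.1, s :: p.1.2), p.2) | p <- delta_f F']
          ++ [seq ((p.1.1, p.1.2), p.2 ++ F') | p <- delta_tree s]
          ++ [:: ((-1, [:: s]), F')]
      end in
    ((1, [:: t]), [::]) :: [seq ((p.1.1, p.1.2), [:: Node p.2]) | p <- delta_f F]
  end.

Fixpoint delta (F : pforest) : tens K :=
  match F with
  | [::] => [:: ((1, [::]), [::])]
  | s :: F' =>
      [seq ((p.1.1, s :: p.1.2), p.2) | p <- delta F']
      ++ [seq ((p.1.1, p.1.2), p.2 ++ F') | p <- delta_tree s]
      ++ [:: ((-1, [:: s]), F')]
  end.

End Coproduct.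

Definition eps (K : fieldType) (F : pforest) : K := if F is [::] then 1 else 0.

(** gamma(t1...tn) = delta_{t1,bullet} t2...tn, gamma(1)=0; as an element of H,
    either a basis forest ([Some]) or zero ([None]). *)
Definition gamma (F : pforest) : option pforest :=
  match F with
  | Node [::] :: F' => Some F'
  | _ => None
  end.

(** A bilinear form on H is determined by its values on pairs of basis forests.
    [is_pairing b] says b satisfies the three defining identities of <-,->
    (by bilinearity it suffices to check them on basis elements). *)
Definition is_pairing (K : fieldType) (b : pforest -> pforest -> K) : Prop :=
  [/\ (forall x, b [::] x = eps K x),
      (forall x y z, b (x ++ y) z =
          \sum_(p <- delta K z) p.1.1 * (b y p.1.2 * b x p.2))
    & (forall x y, b [:: Bplus x] y =
          match gamma y with Some y' => b x y' | None => 0 end)].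

(** Vertices.  A vertex of a forest t_1...t_n is addressed by the list of
    (0-based) child positions from the roots: the root of t_i is [:: i], its
    j-th child is [:: i; j], etc. *)
Fixpoint verts_tree (t : ptree) : seq (seq nat) :=
  match t with
  | Node F =>
    let fix vf (F : pforest) (i : nat) : seq (seq nat) :=
      match F with
      | [::] => [::]
      | s :: F' => [seq i :: p | p <- verts_tree s] ++ vf F' i.+1
      end in
    [::] :: vf F 0
  end.

Fixpoint verts_from (F : pforest) (i : nat) : seq (seq nat) :=
  match F with
  | [::] => [::]
  | s :: F' => [seq i :: p | p <- verts_tree s] ++ verts_from F' i.+1
  end.

Definition verts (F : pforest) : seq (seq nat) := verts_from F 0.
Definition Vert (F : pforest) := seq_sub (verts F).

(** s >=_high s'  iff  s' = s or s' is an ancestor of s (address prefix). *)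
Definition geq_high (s s' : seq nat) : bool := prefix s' s.

(** left-of comparison following the recursive definition: different trees
    t_i, t_j with i < j, or same tree and recurse in the forest obtained by
    deleting its root. *)
Fixpoint leftof (s s' : seq nat) : bool :=
  match s, s' with
  | i :: p, j :: q => (i < j)%N || ((i == j) && leftof p q)
  | _, _ => false
  end.

Definition geq_left (s s' : seq nat) : bool :=
  [&& ~~ geq_high s s', ~~ geq_high s' s & leftof s s'].

Definition geq_hl (s s' : seq nat) : bool := geq_high s s' || geq_left s s'.

Definition S_set (F G : pforest) : {set {ffun Vert F -> Vert G}} :=
  [set sigma : {ffun Vert F -> Vert G} |
     [&& injectiveb sigma,
         [forall y : Vert G, exists x : Vert F, sigma x == y] &
         [forall x : Vert F, forall y : Vert F, (x != y) ==>
           [&& (geq_high (val y) (val x) ==> geq_left (val (sigma x)) (val (sigma y))),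
               (geq_left (val y) (val x) ==> geq_hl (val (sigma x)) (val (sigma y))),
               (geq_high (val (sigma y)) (val (sigma x)) ==> geq_left (val x) (val y)) &
               (geq_left (val (sigma y)) (val (sigma x)) ==> geq_hl (val x) (val y))]]]].

From mathcomp Require Import all_boot all_order all_algebra.
From mathcomp Require Import zify.
Set Implicit Arguments. Unset Strict Implicit. Unset Printing Implicit Defensive.
Import GRing.Theory.

(* List the vertices of a forest in decreasing [>=_{h,l}] order (each subtree
   from left to right, then its root).  Up to isomorphism the forest is then
   recorded by its size and its ancestor relation on indices, and the first
   k vertices as well as the remaining ones are again forests: in these terms
   Delta is deconcatenation, Delta F = sum_k F_{<k} (x) F_{>=k}.  The defining
   identities of <-,-> then give, by induction on F, <F, G> = 1 if F and G
   have the same number n of vertices and there are no i, j such that j is an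
   ancestor of i in F while n-1-i is an ancestor of n-1-j in G, and
   <F, G> = 0 otherwise.  On the other side, conditions (1)-(4) force every
   sigma in S(F, G) to reverse [>=_{h,l}], so S(F, G) contains at most the
   reversal i |-> n-1-i of the enumerations, and the reversal satisfies
   (1)-(4) exactly under the same ancestor condition. *)

(* A shape [(n, a)] abstracts a forest whose [n] vertices are listed in
   decreasing [>=_{h,l}] order, [a i j] meaning that vertex [j] is a strict
   ancestor of vertex [i].  Only the values of [a] on [[0, n)^2] matter. *)
Definition shape := (nat * (nat -> nat -> bool))%type.

Definition shape0 : shape := (0, fun _ _ => false).

Definition shape_cat (x y : shape) : shape :=
  (x.1 + y.1, fun i j => if i < x.1 then (j < x.1) && x.2 i j
                         else (x.1 <= j) && y.2 (i - x.1) (j - x.1)).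

Definition shape_graft (x : shape) : shape :=
  (x.1.+1, fun i j => (i < x.1) && ((j == x.1) || ((j < x.1) && x.2 i j))).

Definition shape_take (k : nat) (x : shape) : shape := (k, x.2).
Definition shape_drop (k : nat) (x : shape) : shape :=
  (x.1 - k, fun i j => x.2 (i + k) (j + k)).

Definition shape_eq (x y : shape) :=
  x.1 = y.1 /\ forall i j, i < x.1 -> j < x.1 -> x.2 i j = y.2 i j.

Lemma shape_eq_refl x : shape_eq x x.
Proof. by split. Qed.

Lemma shape_eq_sym x y : shape_eq x y -> shape_eq y x.
Proof. by case=> e h; split=> // i j; rewrite -e => ? ?; rewrite h. Qed.

Lemma shape_eq_trans x y z : shape_eq x y -> shape_eq y z -> shape_eq x z.
Proof.
case=> e h [e' h']; split; first by rewrite e.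
by move=> i j ? ?; rewrite h // h' // -e.
Qed.

Lemma shape_eq_size0 x y : x.1 = 0 -> y.1 = 0 -> shape_eq x y.
Proof. by move=> x0 y0; split=> [|i j]; rewrite ?x0 ?y0. Qed.

Lemma shape_cat_eq x x' y y' :
  shape_eq x x' -> shape_eq y y' -> shape_eq (shape_cat x y) (shape_cat x' y').
Proof.
move: x x' y y' => [m a] [m' a'] [n c] [n' c'] [/= <- ha] [/= <- hc].
split=> //= i j Hi Hj; case: (ltnP i m) => H1 /=.
  by case: (ltnP j m) => //= H2; rewrite ha.
by case: (leqP m j) => //= H2; rewrite hc //; lia.
Qed.

Lemma shape_graft_eq x x' : shape_eq x x' -> shape_eq (shape_graft x) (shape_graft x').
Proof.
move: x x' => [m a] [m' a'] [/= <- ha]; split=> //= i j Hi Hj.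
by case: (ltnP i m) => //= Hi'; case: (ltnP j m) => //= Hj'; rewrite ?ha ?orbF.
Qed.

Lemma shape_catA x y z :
  shape_eq (shape_cat x (shape_cat y z)) (shape_cat (shape_cat x y) z).
Proof.
move: x y z => [m a] [n c] [p d]; split=> /=; first by rewrite addnA.
move=> i j _ _; case: (ltnP i m) => Hi.
  rewrite (ltn_addr _ Hi) /=; case: (ltnP j m) => Hj /=; last by rewrite andbF.
  by rewrite (ltn_addr _ Hj).
have -> : i - m - n = i - (m + n) by lia.
have -> : j - m - n = j - (m + n) by lia.
case: (ltnP i (m + n)) => Hi2.
  have -> : i - m < n by lia.
  case: (ltnP j m) => Hj /=; first by rewrite andbF.
  by case: (ltnP j (m + n)) => Hj2; [have -> : j - m < n by lia
                                     | have -> : j - m < n = false by lia].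
have -> : i - m < n = false by lia.
case: (ltnP j m) => Hj /=; first by have -> : m + n <= j = false by lia.
by case: (ltnP j (m + n)) => Hj2; [have -> : n <= j - m = false by lia
                                   | have -> : n <= j - m by lia].
Qed.

Lemma shape_cat0 x : shape_eq (shape_cat x shape0) x.
Proof.
case: x => m a; split=> /=; first by rewrite addn0.
by move=> i j; rewrite addn0 => Hi Hj; rewrite Hi Hj.
Qed.

Lemma shape_take_cat_l x y k : k <= x.1 ->
  shape_eq (shape_take k x) (shape_take k (shape_cat x y)).
Proof.
case: x y => [m a] [n c] /= Hk; split=> //= i j Hi Hj.
rewrite (_ : i < m); last by lia.
by rewrite (_ : j < m); last by lia.
Qed.

Lemma shape_drop_cat_l x y k : k <= x.1 ->
  shape_eq (shape_cat (shape_drop k x) y) (shape_drop k (shape_cat x y)).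
Proof.
case: x y => [m a] [n c] /= Hk; split=> /=; first by lia.
move=> i j Hi Hj; case: (ltnP i (m - k)) => H1.
  rewrite (_ : i + k < m); last by lia.
  by rewrite (_ : j < m - k = (j + k < m)); last by lia.
rewrite (_ : i + k < m = false); last by lia.
rewrite (_ : i - (m - k) = i + k - m); last by lia.
rewrite (_ : j - (m - k) = j + k - m); last by lia.
by rewrite (_ : m - k <= j = (m <= j + k)); last by lia.
Qed.

Lemma shape_take_cat_r x y k : k <= y.1 ->
  shape_eq (shape_cat x (shape_take k y)) (shape_take (x.1 + k) (shape_cat x y)).
Proof. by case: x y => [m a] [n c] /= Hk; split. Qed.

Lemma shape_drop_cat_r x y k : k <= y.1 ->
  shape_eq (shape_drop k y) (shape_drop (x.1 + k) (shape_cat x y)).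
Proof.
case: x y => [m a] [n c] /= Hk; split=> /=; first by lia.
move=> i j Hi Hj; rewrite (_ : i + (m + k) < m = false); last by lia.
rewrite (_ : m <= j + (m + k)); last by lia.
by rewrite !(_ : forall u, u + (m + k) - m = u + k) // => u; lia.
Qed.

Lemma shape_take_graft x k : k <= x.1 ->
  shape_eq (shape_take k x) (shape_take k (shape_graft x)).
Proof.
case: x => m a /= Hk; split=> //= i j Hi Hj.
rewrite (_ : i < m); last by lia.
rewrite (_ : j == m = false); last by lia.
by rewrite (_ : j < m); last by lia.
Qed.

Lemma shape_drop_graft x k : k <= x.1 ->
  shape_eq (shape_graft (shape_drop k x)) (shape_drop k (shape_graft x)).
Proof.
case: x => m a /= Hk; split=> /=; first by lia.
move=> i j Hi Hj; rewrite (_ : i < m - k = (i + k < m)); last by lia.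
rewrite (_ : (j == m - k) = (j + k == m)); last by lia.
by rewrite (_ : j < m - k = (j + k < m)); last by lia.
Qed.

Fixpoint tree_shape (t : ptree) : shape :=
  match t with
  | Node F => shape_graft (foldr (fun s acc => shape_cat (tree_shape s) acc) shape0 F)
  end.

Definition forest_shape (F : pforest) : shape :=
  foldr (fun s acc => shape_cat (tree_shape s) acc) shape0 F.

Lemma tree_shapeE F : tree_shape (Node F) = shape_graft (forest_shape F).
Proof. by []. Qed.

Lemma forest_shape_cons t F :
  forest_shape (t :: F) = shape_cat (tree_shape t) (forest_shape F).
Proof. by []. Qed.

Lemma tree_shape_gt0 t : 0 < (tree_shape t).1.
Proof. by case: t. Qed.

Lemma forest_shape1 t : shape_eq (forest_shape [:: t]) (tree_shape t).
Proof. exact: shape_cat0. Qed.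

Lemma forest_shape_cat F G :
  shape_eq (forest_shape (F ++ G)) (shape_cat (forest_shape F) (forest_shape G)).
Proof.
elim: F => [|s F IH] /=.
  by case: (forest_shape G) => n c; split=> // i j _ _ /=; rewrite !subn0.
by apply: shape_eq_trans (shape_cat_eq (shape_eq_refl _) IH) _; apply: shape_catA.
Qed.

Definition ptree_mut_ind (P : ptree -> Prop) (Q : pforest -> Prop)
  (Q0 : Q [::]) (Qcons : forall t F, P t -> Q F -> Q (t :: F))
  (PNode : forall F, Q F -> P (Node F)) : forall t, P t :=
  fix f t := match t with Node F => PNode F
    ((fix g F := match F return Q F with
                 | [::] => Q0 | s :: F' => Qcons s F' (f s) (g F') end) F) end.

Lemma pforest_mut_ind (P : ptree -> Prop) (Q : pforest -> Prop)
  (Q0 : Q [::]) (Qcons : forall t F, P t -> Q F -> Q (t :: F))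
  (PNode : forall F, Q F -> P (Node F)) : forall F, Q F.
Proof.
move=> F; elim: F => // s F IH; apply: (Qcons) => //.
exact: (ptree_mut_ind Q0 Qcons PNode).
Qed.

Lemma shape_take_size x : shape_eq x (shape_take x.1 x).
Proof. by split. Qed.

Lemma shape_drop0 x : shape_eq (shape_drop 0 x) x.
Proof. by case: x => n c; split=> [|i j _ _] /=; rewrite ?subn0 ?addn0. Qed.

Section Deconcatenation.
Variable K : fieldType.
Local Open Scope ring_scope.

Definition shape_invariant (phi : shape -> shape -> K) :=
  forall x x' y y', shape_eq x x' -> shape_eq y y' -> phi x y = phi x' y'.

Definition deconcatenates (d : tens K) (x : shape) :=
  forall phi, shape_invariant phi ->
  \sum_(p <- d) p.1.1 * phi (forest_shape p.1.2) (forest_shape p.2) =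
  \sum_(0 <= k < x.1.+1) phi (shape_take k x) (shape_drop k x).

Lemma big_nat_glue (T : nat -> K) m n :
  \sum_(0 <= k < n.+1) T (m + k)%N + (\sum_(0 <= k < m.+1) T k - T m) =
  \sum_(0 <= k < (m + n).+1) T k.
Proof.
rewrite (@big_cat_nat _ _ _ m 0 (m + n).+1) //=; last by lia.
rewrite (@big_nat_recr _ _ _ m 0) //= addrK addrC; congr (_ + _).
rewrite -[in RHS](add0n m) big_addn (_ : (m + n).+1 - m = n.+1)%N; last by lia.
by apply: eq_bigr => k _; rewrite addnC.
Qed.

Lemma delta_nil_deconcatenates : deconcatenates (delta K [::]) shape0.
Proof.
move=> phi phiP; rewrite /= big_cons big_nil big_nat1 addr0 mul1r.
by apply: phiP; split.
Qed.

Lemma delta_cons_deconcatenates s F :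
  deconcatenates (delta_tree K s) (tree_shape s) ->
  deconcatenates (delta K F) (forest_shape F) ->
  deconcatenates (delta K (s :: F)) (forest_shape (s :: F)).
Proof.
move=> IHs IHF phi phiP; rewrite [delta K (s :: F)]/= !big_cat /= !big_map.
rewrite big_cons big_nil addr0 forest_shape_cons.
set S := tree_shape s; set Z := forest_shape F; set J := shape_cat S Z.
pose T k := phi (shape_take k J) (shape_drop k J); rewrite -/(T _).
have sum_right : \sum_(p <- delta K F) p.1.1 * phi (shape_cat S (forest_shape p.1.2))
      (forest_shape p.2) = \sum_(0 <= k < Z.1.+1) T (S.1 + k)%N.
  rewrite (IHF (fun u v => phi (shape_cat S u) v)); last first.
    by move=> u u' v v' eu ev; apply: phiP => //; apply: shape_cat_eq.
  apply: eq_big_nat => k /andP[_ Hk]; apply: phiP.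
    exact: shape_take_cat_r.
  exact: shape_drop_cat_r.
have sum_left : \sum_(p <- delta_tree K s) p.1.1 * phi (forest_shape p.1.2)
      (forest_shape (p.2 ++ F)) = \sum_(0 <= k < S.1.+1) T k.
  transitivity (\sum_(p <- delta_tree K s)
      p.1.1 * phi (forest_shape p.1.2) (shape_cat (forest_shape p.2) Z)).
    apply: eq_bigr => p _; congr (_ * _); apply: phiP; first exact: shape_eq_refl.
    exact: forest_shape_cat.
  rewrite (IHs (fun u v => phi u (shape_cat v Z))); last first.
    by move=> u u' v v' eu ev; apply: phiP => //; apply: shape_cat_eq.
  apply: eq_big_nat => k /andP[_ Hk]; apply: phiP.
    exact: shape_take_cat_l.
  exact: shape_drop_cat_l.
(* The term [- s (x) F] of [Delta (s F)] cancels the cut between [s] and [F],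
   which both sums count. *)
have overlap : phi (forest_shape [:: s]) Z = T S.1.
  apply: phiP.
    apply: shape_eq_trans (forest_shape1 s) _.
    apply: shape_eq_trans (shape_take_size S) _; exact: shape_take_cat_l.
  rewrite -[X in shape_drop X]addn0.
  apply: shape_eq_trans (shape_eq_sym (shape_drop0 Z)) _; exact: shape_drop_cat_r.
by rewrite sum_right sum_left overlap mulN1r big_nat_glue.
Qed.

Lemma delta_node_deconcatenates F :
  deconcatenates (delta K F) (forest_shape F) ->
  deconcatenates (delta_tree K (Node F)) (tree_shape (Node F)).
Proof.
move=> IHF phi phiP; rewrite /= big_cons big_map mul1r -/(forest_shape F).
set X := forest_shape F; rewrite -/(shape_graft X).
rewrite (@big_nat_recr _ _ _ X.1.+1) //= addrC; congr (_ + _).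
  by apply: phiP; [apply: shape_eq_trans (shape_cat0 _) _; split
                  | apply: shape_eq_size0; rewrite /= ?subnn].
transitivity (\sum_(p <- delta K F)
    p.1.1 * phi (forest_shape p.1.2) (shape_graft (forest_shape p.2))).
  apply: eq_bigr => p _; congr (_ * _); apply: phiP; first exact: shape_eq_refl.
  exact: shape_cat0.
rewrite (IHF (fun u v => phi u (shape_graft v))); last first.
  by move=> u u' v v' eu ev; apply: phiP => //; apply: shape_graft_eq.
apply: eq_big_nat => k /andP[_ Hk]; apply: phiP.
  exact: shape_take_graft.
exact: shape_drop_graft.
Qed.

Lemma delta_deconcatenates F : deconcatenates (delta K F) (forest_shape F).
Proof.
exact: (pforest_mut_ind delta_nil_deconcatenates delta_cons_deconcatenates
          delta_node_deconcatenates).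
Qed.

End Deconcatenation.

Definition shape_dual (x y : shape) : bool := (x.1 == y.1) &&
  all (fun i => all (fun j => ~~ (x.2 i j && y.2 (x.1.-1 - j) (x.1.-1 - i)))
                    (iota 0 x.1)) (iota 0 x.1).

Lemma shape_dualP x y : reflect (x.1 = y.1 /\ forall i j, i < x.1 -> j < x.1 ->
   ~~ (x.2 i j && y.2 (x.1.-1 - j) (x.1.-1 - i))) (shape_dual x y).
Proof.
apply: (iffP andP) => [[/eqP e /allP H]|[e H]].
  split=> // i j Hi Hj; have := H i; rewrite mem_iota add0n Hi => /(_ isT) /allP.
  by apply; rewrite mem_iota add0n.
split; first exact/eqP.
apply/allP => i; rewrite mem_iota add0n => Hi.
by apply/allP => j; rewrite mem_iota add0n => Hj; apply: H.
Qed.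

Lemma shape_dual_eq x x' y y' :
  shape_eq x x' -> shape_eq y y' -> shape_dual x y = shape_dual x' y'.
Proof.
move=> [ex hx] [ey hy]; apply/shape_dualP/shape_dualP => -[e H]; split.
- by rewrite -ex -ey.
- by move=> i j; rewrite -ex => Hi Hj; rewrite -hx // -hy; [exact: H | lia | lia].
- by rewrite ex ey.
- move=> i j Hi Hj; rewrite hx // hy ex; try lia.
  by have := H i j; rewrite -ex; apply; lia.
Qed.

Lemma shape_dual_size x y : shape_dual x y -> x.1 = y.1.
Proof. by case/shape_dualP. Qed.

Lemma shape_dual_cat x y z : shape_dual (shape_cat x y) z =
  [&& y.1 <= z.1, shape_dual y (shape_take y.1 z) & shape_dual x (shape_drop y.1 z)].
Proof.
case: x y z => [m a] [n c] [N d] /=.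
apply/shape_dualP/and3P => /= [[e H]|[hN /shape_dualP [/= e1 H1] /shape_dualP [/= e2 H2]]].
  split; first by lia.
  - apply/shape_dualP; split=> //= i j Hi Hj.
    have := H (i + m) (j + m) ltac:(lia) ltac:(lia).
    rewrite (_ : i + m < m = false) /=; last by lia.
    rewrite (_ : m <= j + m) /= ?addnK; last by lia.
    rewrite (_ : (m + n).-1 - (j + m) = n.-1 - j); last by lia.
    by rewrite (_ : (m + n).-1 - (i + m) = n.-1 - i); last by lia.
  - apply/shape_dualP; split=> /=; first by lia.
    move=> i j Hi Hj; have := H i j ltac:(lia) ltac:(lia).
    rewrite Hi Hj /=.
    rewrite (_ : (m + n).-1 - j = m.-1 - j + n); last by lia.
    by rewrite (_ : (m + n).-1 - i = m.-1 - i + n); last by lia.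
split; first by lia.
move=> i j Hi Hj; case: (ltnP i m) => Hi'.
  case: (ltnP j m) => Hj' //=; have := H2 i j Hi' Hj'.
  rewrite (_ : (m + n).-1 - j = m.-1 - j + n); last by lia.
  by rewrite (_ : (m + n).-1 - i = m.-1 - i + n); last by lia.
case: (ltnP j m) => Hj' //=; have := H1 (i - m) (j - m) ltac:(lia) ltac:(lia).
rewrite (_ : (m + n).-1 - j = n.-1 - (j - m)); last by lia.
by rewrite (_ : (m + n).-1 - i = n.-1 - (i - m)); last by lia.
Qed.

Lemma shape_dual0 G : shape_dual shape0 (forest_shape G) = nilp G.
Proof.
case: G => [|t G]; first by apply/shape_dualP; split.
by apply/shape_dualP => -[/= e _]; have := tree_shape_gt0 t; lia.
Qed.

Lemma shape_dual_graft_leaf x z :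
  shape_dual (shape_graft x) (shape_cat (shape_graft shape0) z) = shape_dual x z.
Proof.
case: x z => [m a] [n c].
apply/shape_dualP/shape_dualP => /= -[e H]; split; try lia.
- move=> i j Hi Hj; have := H i j (ltnW Hi) (ltnW Hj).
  rewrite Hi Hj (_ : (j == m) = false); last by lia.
  rewrite (_ : (m - j < 1) = false); last by lia.
  rewrite (_ : 0 < m - i); last by lia.
  rewrite (_ : m - j - 1 = m.-1 - j); last by lia.
  by rewrite (_ : m - i - 1 = m.-1 - i) ?andbT //; lia.
- move=> i j Hi Hj /=; case: (ltnP i m) => //= Hi'.
  case: (eqVneq j m) => [-> | Hjm] /=; first by rewrite subnn /= andbF.
  have Hj' : j < m by lia.
  rewrite Hj' /=; case: (boolP (a i j)) => //= Ha.
  rewrite (_ : (m - j < 1) = false); last by lia.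
  rewrite (_ : 0 < m - i) /=; last by lia.
  have := H i j Hi' Hj'; rewrite Ha /=.
  rewrite (_ : m - j - 1 = m.-1 - j); last by lia.
  by rewrite (_ : m - i - 1 = m.-1 - i); last by lia.
Qed.

Lemma shape_dual_graft_graft x y z : 0 < y.1 ->
  shape_dual (shape_graft x) (shape_cat (shape_graft y) z) = false.
Proof.
case: x y z => [m a] [p d] [n c] /= Hp.
apply/negbTE/negP => /shape_dualP /= -[e H].
have := H (m - p) m ltac:(lia) ltac:(lia).
rewrite (_ : m - p < m); last by lia.
rewrite eqxx subnn /= (_ : m - (m - p) = p); last by lia.
by rewrite Hp ltnSn eqxx.
Qed.

Lemma shape_dual_graft x G :
  shape_dual (shape_graft (forest_shape x)) (forest_shape G) =
  if gamma G is Some G' then shape_dual (forest_shape x) (forest_shape G') else false.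
Proof.
case: G => [|[[|s y]] G] /=.
- by apply/shape_dualP => -[].
- exact: shape_dual_graft_leaf.
- by apply: shape_dual_graft_graft; rewrite /= addn_gt0 tree_shape_gt0.
Qed.

Section PairingIsDuality.
Variables (K : fieldType) (b : pforest -> pforest -> K).
Hypothesis bP : is_pairing b.
Local Open Scope ring_scope.

Lemma sum_shape_dual_deconc (x y z : shape) :
  \sum_(0 <= k < z.1.+1)
     (shape_dual y (shape_take k z))%:R * (shape_dual x (shape_drop k z))%:R =
  (shape_dual (shape_cat x y) z)%:R :> K.
Proof.
have off_size k : k != y.1 -> shape_dual y (shape_take k z) = false.
  by move=> hk; apply: contraNF hk => /shape_dual_size ->.
have vanish (k : nat) : k != y.1 ->
    ((shape_dual y (shape_take k z))%:R * (shape_dual x (shape_drop k z))%:R = 0 :> K)%R.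
  by move=> /off_size ->; rewrite mul0r.
rewrite shape_dual_cat; case: (leqP y.1 z.1) => hy /=; last first.
  by rewrite big1_seq // => k /andP[_]; rewrite mem_index_iota => Hk; apply: vanish; lia.
rewrite (@big_cat_nat _ _ _ y.1) //=; last by lia.
rewrite (@big_ltn _ _ _ y.1 z.1.+1) ?ltnS //=.
rewrite big1_seq ?add0r; last first.
  by move=> k /andP[_]; rewrite mem_index_iota => Hk; apply: vanish; lia.
rewrite big1_seq ?addr0 -?natrM ?mulnb //.
by move=> k /andP[_]; rewrite mem_index_iota => Hk; apply: vanish; lia.
Qed.

Let dual_value F := forall G, b F G = (shape_dual (forest_shape F) (forest_shape G))%:R.

Lemma pairing_nil_dual : dual_value [::].
Proof. by case: bP => b1 _ _ G; rewrite b1 shape_dual0; case: G. Qed.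

Lemma pairing_node_dual x : dual_value x -> dual_value [:: Node x].
Proof.
case: bP => _ _ bB bx G; rewrite bB.
rewrite (shape_dual_eq (forest_shape1 _) (shape_eq_refl _)) tree_shapeE.
by rewrite shape_dual_graft; case: (gamma G).
Qed.

Lemma pairing_cat_dual x y : dual_value x -> dual_value y -> dual_value (x ++ y).
Proof.
case: bP => _ bM _ IHx IHy G; rewrite bM.
rewrite (shape_dual_eq (forest_shape_cat x y) (shape_eq_refl _)).
pose phi u v : K := (shape_dual (forest_shape y) u)%:R * (shape_dual (forest_shape x) v)%:R.
have phiP : shape_invariant phi.
  move=> u u' v v' eu ev.
  by rewrite /phi (shape_dual_eq (shape_eq_refl _) eu) (shape_dual_eq (shape_eq_refl _) ev).
rewrite -sum_shape_dual_deconc -(delta_deconcatenates G phiP).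
by apply: eq_bigr => p _; rewrite IHx IHy.
Qed.

Lemma pairing_shape_dual F : dual_value F.
Proof.
exact: (@pforest_mut_ind (fun t => dual_value [:: t]) dual_value pairing_nil_dual
          (fun t F => pairing_cat_dual (x := [:: t]) (y := F)) pairing_node_dual).
Qed.

End PairingIsDuality.

Fixpoint hl_verts_tree (t : ptree) : seq (seq nat) :=
  match t with
  | Node F =>
    (let fix hf (F : pforest) (i : nat) : seq (seq nat) :=
       match F with
       | [::] => [::]
       | s :: F' => map (cons i) (hl_verts_tree s) ++ hf F' i.+1
       end in hf F 0) ++ [:: [::]]
  end.

Fixpoint hl_verts_from (F : pforest) (i : nat) : seq (seq nat) :=
  match F with
  | [::] => [::]
  | s :: F' => map (cons i) (hl_verts_tree s) ++ hl_verts_from F' i.+1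
  end.

Lemma hl_verts_treeE F : hl_verts_tree (Node F) = hl_verts_from F 0 ++ [:: [::]].
Proof. by rewrite /=; congr (_ ++ _); elim: F 0 => //= s F IH i; rewrite IH. Qed.

Lemma verts_treeE F : verts_tree (Node F) = [::] :: verts_from F 0.
Proof. by rewrite /=; congr (_ :: _); elim: F 0 => //= s F IH i; rewrite IH. Qed.

Lemma perm_hl_verts_from F i : perm_eq (hl_verts_from F i) (verts_from F i).
Proof.
move: F i; apply: (@pforest_mut_ind (fun t => perm_eq (hl_verts_tree t) (verts_tree t))
                    (fun F => forall i, perm_eq (hl_verts_from F i) (verts_from F i))).
- by [].
- by move=> t F Ht HF i /=; apply: perm_cat => //; apply: perm_map.
- by move=> F HF; rewrite hl_verts_treeE verts_treeE cats1 perm_rcons perm_cons.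
Qed.

Lemma hl_verts_from_head F i v :
  v \in hl_verts_from F i -> exists k q, v = k :: q /\ i <= k.
Proof.
elim: F i => //= t F IH i; rewrite mem_cat => /orP[/mapP[q _ ->]|/IH [k [q [-> Hk]]]].
  by exists i, q.
by exists k, q; split=> //; lia.
Qed.

Lemma nil_notin_hl_verts_from F i : [::] \notin hl_verts_from F i.
Proof. by apply/negP => /hl_verts_from_head [k [q []]]. Qed.

Lemma geq_high_cons a p q : geq_high (a :: p) (a :: q) = geq_high p q.
Proof. by rewrite /geq_high /= eqxx. Qed.

Lemma geq_high_head_neq a b p q : a != b -> geq_high (a :: p) (b :: q) = false.
Proof. by move=> H; rewrite /geq_high /= eq_sym (negbTE H). Qed.

Lemma geq_left_cons a p q : geq_left (a :: p) (a :: q) = geq_left p q.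
Proof. by rewrite /geq_left !geq_high_cons /= ltnn eqxx. Qed.

Lemma geq_hl_cons a p q : geq_hl (a :: p) (a :: q) = geq_hl p q.
Proof. by rewrite /geq_hl geq_high_cons geq_left_cons. Qed.

Lemma geq_hl_refl v : geq_hl v v.
Proof. by rewrite /geq_hl /geq_high prefix_refl. Qed.

Lemma geq_high_hl a b : geq_high a b -> geq_hl a b.
Proof. by rewrite /geq_hl => ->. Qed.

Lemma geq_leftE a b : geq_left a b = geq_hl a b && ~~ geq_high a b.
Proof. by rewrite /geq_hl /geq_left; case: (geq_high a b); rewrite ?andbT ?andbF. Qed.

Definition verts_shape (V : seq (seq nat)) : shape :=
  (size V, fun i j => (i != j) && geq_high (nth [::] V i) (nth [::] V j)).

Lemma verts_shape_map_cons k A :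
  shape_eq (verts_shape (map (cons k) A)) (verts_shape A).
Proof.
split=> [|i j]; rewrite /= size_map // => Hi Hj.
by rewrite !(nth_map [::]) // geq_high_cons.
Qed.

Lemma verts_shape_cat (A B : seq (seq nat)) :
  allrel (fun a b => ~~ geq_high a b && ~~ geq_high b a) A B ->
  shape_eq (shape_cat (verts_shape A) (verts_shape B)) (verts_shape (A ++ B)).
Proof.
move=> /allrelP incomparable; split=> [|i j]; rewrite /= ?size_cat // => /= Hi Hj.
rewrite !nth_cat; case: (ltnP i (size A)) => Hi'; case: (ltnP j (size A)) => Hj' /=.
- by [].
- have HjB : j - size A < size B by lia.
  have /andP [/negbTE -> _] := incomparable _ _ (mem_nth [::] Hi') (mem_nth [::] HjB).
  by rewrite andbF.
- have HiB : i - size A < size B by lia.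
  have /andP [_ /negbTE ->] := incomparable _ _ (mem_nth [::] Hj') (mem_nth [::] HiB).
  by rewrite andbF.
- by rewrite (_ : (i - size A != j - size A) = (i != j)) //; lia.
Qed.

Lemma verts_shape_graft (A : seq (seq nat)) : [::] \notin A ->
  shape_eq (shape_graft (verts_shape A)) (verts_shape (A ++ [:: [::]])).
Proof.
move=> nilA; split=> [|i j]; rewrite /= ?size_cat ?addn1 // => /= Hi Hj.
rewrite !nth_cat; case: (ltnP i (size A)) => Hi'; case: (ltnP j (size A)) => Hj' /=.
- by rewrite (_ : j == size A = false) //; lia.
- rewrite (_ : j = size A); last by lia.
  by rewrite eqxx subnn /= /geq_high prefix0s (_ : i != size A) //; lia.
- rewrite (_ : i - size A = 0) /=; last by lia.
  case E: (nth [::] A j) => [|? ?]; rewrite ?andbF //.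
  by move: nilA; rewrite -E mem_nth.
- by rewrite (_ : i = j) ?eqxx //; lia.
Qed.

Lemma forest_shape_hl_verts F k :
  shape_eq (forest_shape F) (verts_shape (hl_verts_from F k)).
Proof.
move: F k; apply: (@pforest_mut_ind
  (fun t => shape_eq (tree_shape t) (verts_shape (hl_verts_tree t)))
  (fun F => forall k, shape_eq (forest_shape F) (verts_shape (hl_verts_from F k)))).
- by move=> k; split.
- move=> t F Ht HF k; rewrite forest_shape_cons /=.
  apply: shape_eq_trans (verts_shape_cat _); last first.
    rewrite allrel_mapl; apply/allrelP => p v _ /hl_verts_from_head [a [q [-> Ha]]].
    by rewrite !geq_high_head_neq //; lia.
  apply: shape_cat_eq (HF k.+1).
  exact: shape_eq_trans Ht (shape_eq_sym (verts_shape_map_cons _ _)).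
- move=> F HF; rewrite tree_shapeE hl_verts_treeE.
  apply: shape_eq_trans (verts_shape_graft (nil_notin_hl_verts_from F 0)).
  exact: shape_graft_eq.
Qed.

Definition hl_gt : rel (seq nat) := fun a b => geq_hl a b && ~~ geq_hl b a.

Lemma hl_gt_head_lt a b p q : a < b -> hl_gt (a :: p) (b :: q).
Proof.
move=> H; rewrite /hl_gt /geq_hl !geq_high_head_neq; try lia.
by rewrite /geq_left !geq_high_head_neq /= ?H; try lia; rewrite (_ : b < a = false) //; lia.
Qed.

Lemma hl_gt_nil a q : hl_gt (a :: q) [::].
Proof. by rewrite /hl_gt /geq_hl /geq_left /geq_high. Qed.

Lemma hl_verts_from_sorted F k : pairwise hl_gt (hl_verts_from F k).
Proof.
move: F k; apply: (@pforest_mut_ind (fun t => pairwise hl_gt (hl_verts_tree t))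
                    (fun F => forall k, pairwise hl_gt (hl_verts_from F k))).
- by [].
- move=> t F Ht HF k; rewrite /= pairwise_cat HF andbT pairwise_map.
  apply/andP; split.
    rewrite allrel_mapl; apply/allrelP => p v _ /hl_verts_from_head [a [q [-> Ha]]].
    by apply: hl_gt_head_lt.
  by apply: sub_pairwise Ht => p q; rewrite /hl_gt /= !geq_hl_cons.
- move=> F HF; rewrite hl_verts_treeE pairwise_cat HF andbT /= allrel1r.
  apply/allP => v /hl_verts_from_head [a [q [-> _]]]; exact: hl_gt_nil.
Qed.

Lemma hl_gt_irr : irreflexive hl_gt.
Proof. by move=> v; rewrite /hl_gt geq_hl_refl andbF. Qed.

Lemma sorted_geq_hl_nth V i j : pairwise hl_gt V ->
  i < size V -> j < size V -> i != j ->
  geq_hl (nth [::] V i) (nth [::] V j) = (i < j).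
Proof.
move=> /(pairwiseP [::]) sortedV Hi Hj; case: ltngtP => // [ij | ji] _.
  by case/andP: (sortedV i j Hi Hj ij).
by case/andP: (sortedV j i Hj Hi ji) => _ /negbTE.
Qed.

Lemma decreasing_rev n (g : nat -> nat) : (forall i, i < n -> g i < n) ->
  (forall i j, i < j -> j < n -> g j < g i) -> forall i, i < n -> g i = n.-1 - i.
Proof.
move=> g_lt g_decr.
have up i : i < n -> g i <= n.-1 - i.
  elim: i => [|i IH] Hi; first by have := g_lt 0 Hi; lia.
  by have := IH (ltnW Hi); have := g_decr i i.+1 (ltnSn i) Hi; lia.
have lo k i : i < n -> n.-1 - i = k -> k <= g i.
  elim: k i => [|k IH] i Hi Hk //.
  have Hi1 : i.+1 < n by lia.
  by have := IH i.+1 Hi1 ltac:(lia); have := g_decr i i.+1 (ltnSn i) Hi1; lia.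
by move=> i Hi; have := up i Hi; have := lo _ i Hi erefl; lia.
Qed.

Lemma reversal_conditions (a b a' b' : seq nat) (c : bool) :
  geq_hl b a = c -> geq_hl a b = ~~ c -> geq_hl a' b' = c -> geq_hl b' a' = ~~ c ->
  [&& geq_high b a ==> geq_left a' b', geq_left b a ==> geq_hl a' b',
      geq_high b' a' ==> geq_left a b & geq_left b' a' ==> geq_hl a b] =
  ~~ (geq_high b a && geq_high a' b') && ~~ (geq_high b' a' && geq_high a b).
Proof.
move=> e1 e2 e3 e4; rewrite !geq_leftE e1 e2 e3 e4.
case: c e1 e2 e3 e4 => e1 e2 e3 e4 /=.
- have -> : geq_high a b = false by apply/negbTE/negP => /geq_high_hl; rewrite e2.
  have -> : geq_high b' a' = false by apply/negbTE/negP => /geq_high_hl; rewrite e4.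
  by case: (geq_high b a); case: (geq_high a' b').
- have -> : geq_high b a = false by apply/negbTE/negP => /geq_high_hl; rewrite e1.
  have -> : geq_high a' b' = false by apply/negbTE/negP => /geq_high_hl; rewrite e3.
  by case: (geq_high b' a'); case: (geq_high a b); rewrite ?andbT.
Qed.

Section Ranks.
Variable F : pforest.
Local Notation V := (hl_verts_from F 0).

Lemma uniq_hl_verts : uniq V.
Proof. exact: pairwise_uniq hl_gt_irr (hl_verts_from_sorted F 0). Qed.

Lemma mem_hl_verts v : (v \in V) = (v \in verts F).
Proof. exact: (perm_mem (perm_hl_verts_from F 0)). Qed.

Lemma card_Vert : #|{: Vert F}| = size V.
Proof.
rewrite card_seq_sub ?(perm_size (perm_hl_verts_from F 0)) //.
by rewrite -(perm_uniq (perm_hl_verts_from F 0)) uniq_hl_verts.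
Qed.

Definition vrank (x : Vert F) : nat := index (val x) V.

Lemma vrank_lt x : vrank x < size V.
Proof. by rewrite /vrank index_mem mem_hl_verts (valP x). Qed.

Lemma nth_vrank x : nth [::] V (vrank x) = val x.
Proof. by rewrite nth_index // mem_hl_verts (valP x). Qed.

Lemma vrank_inj : injective vrank.
Proof. by move=> x y e; apply: val_inj; rewrite -nth_vrank e nth_vrank. Qed.

Lemma vrank_onto k : k < size V -> exists x, vrank x = k.
Proof.
move=> Hk; have Hm : nth [::] V k \in verts F by rewrite -mem_hl_verts mem_nth.
by exists (SeqSub Hm); rewrite /vrank /= index_uniq // uniq_hl_verts.
Qed.

Lemma geq_hl_vrank x y : x != y -> geq_hl (val x) (val y) = (vrank x < vrank y).
Proof.
move=> xy; rewrite -nth_vrank -(nth_vrank y) sorted_geq_hl_nth ?vrank_lt //.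
  exact: hl_verts_from_sorted.
by apply: contra xy => /eqP /vrank_inj ->.
Qed.

End Ranks.

Definition reversal_compatible (V W : seq (seq nat)) :=
  forall i j, i < size V -> j < size V -> i != j ->
  ~~ (geq_high (nth [::] V i) (nth [::] V j) &&
      geq_high (nth [::] W ((size V).-1 - j)) (nth [::] W ((size V).-1 - i))).

Lemma shape_dual_vertsP V W : size V = size W ->
  reflect (reversal_compatible V W) (shape_dual (verts_shape V) (verts_shape W)).
Proof.
move=> nVW; apply: (iffP (shape_dualP _ _)) => [[_ H] i j Hi Hj ij | H].
  have := H i j Hi Hj; rewrite /= ij (_ : ((size V).-1 - j == (size V).-1 - i) = false) //.
  by move: Hi Hj => /= Hi Hj; lia.
split=> // i j /= Hi Hj; case: (eqVneq i j) => [-> //| ij].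
rewrite (_ : ((size V).-1 - j == (size V).-1 - i) = false) /=; first exact: H.
by lia.
Qed.

Section ReversalBijection.
Variables F G : pforest.
Local Notation V := (hl_verts_from F 0).
Local Notation W := (hl_verts_from G 0).
Local Notation n := (size V).

Lemma S_set_reverses_hl (s : {ffun Vert F -> Vert G}) x y :
  s \in S_set F G -> x != y -> geq_hl (val y) (val x) -> geq_hl (val (s x)) (val (s y)).
Proof.
rewrite inE => /and3P [_ _ /forallP cond] xy.
have /and4P [c1 c2 _ _] := implyP (forallP (cond x) y) xy.
rewrite {1}/geq_hl => /orP [hyx | lyx].
  by move: (implyP c1 hyx); rewrite geq_leftE => /andP [].
exact: (implyP c2 lyx).
Qed.

Lemma S_set_size s : s \in S_set F G -> size V = size W.
Proof.
rewrite inE => /and3P [/injectiveP s_inj /forallP s_onto _].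
rewrite -!card_Vert; apply/eqP; rewrite eqn_leq (leq_card _ s_inj) /=.
rewrite -cardsT (_ : [set: Vert G] = [set s x | x : Vert F]) ?leq_imset_card //.
apply/setP => y; rewrite inE; case/existsP: (s_onto y) => x /eqP <-.
by apply/esym/imsetP; exists x.
Qed.

Lemma S_set_vrank s : s \in S_set F G -> forall x, vrank (s x) = n.-1 - vrank x.
Proof.
move=> sS x; have nVW := S_set_size sS.
have s_inj : injective s by move: sS; rewrite inE => /and3P [/injectiveP].
pose g k := if [pick z : Vert F | vrank z == k] is Some z then vrank (s z) else 0.
have gE z : g (vrank z) = vrank (s z).
  by rewrite /g; case: pickP => [z' /eqP /vrank_inj -> // | /(_ z)]; rewrite eqxx.
have g_at k : k < n -> exists z, vrank z = k /\ g k = vrank (s z).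
  by move=> /vrank_onto [z <-]; exists z; rewrite gE.
rewrite -gE; apply: decreasing_rev (vrank_lt x).
  by move=> k /g_at [z [_ ->]]; rewrite nVW vrank_lt.
move=> i j ij Hj; have [z1 [e1 ->]] := g_at i (ltn_trans ij Hj).
have [z2 [e2 ->]] := g_at j Hj.
have z21 : z2 != z1 by apply/eqP => z21; move: ij; rewrite -e1 -e2 z21 ltnn.
rewrite -geq_hl_vrank; last by apply: contra z21 => /eqP /s_inj ->.
by apply: S_set_reverses_hl; rewrite // geq_hl_vrank 1?eq_sym // e1 e2.
Qed.

Lemma exists_reversal : size V = size W ->
  exists r : {ffun Vert F -> Vert G}, forall x, vrank (r x) = n.-1 - vrank x.
Proof.
move=> nVW; have r_lt (x : Vert F) : n.-1 - vrank x < size W.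
  by rewrite -nVW; have := vrank_lt x; lia.
have r_mem (x : Vert F) : nth [::] W (n.-1 - vrank x) \in verts G.
  by rewrite -mem_hl_verts mem_nth.
exists [ffun x => SeqSub (r_mem x)] => x.
by rewrite {1}/vrank ffunE /= index_uniq ?uniq_hl_verts //; exact: r_lt.
Qed.

Section Reversal.
Variable r : {ffun Vert F -> Vert G}.
Hypothesis nVW : size V = size W.
Hypothesis rE : forall x, vrank (r x) = n.-1 - vrank x.

Lemma reversal_inj : injective r.
Proof.
move=> x y /(congr1 (@vrank G)); rewrite !rE => e; apply: vrank_inj.
by have := vrank_lt x; have := vrank_lt y; lia.
Qed.

Let compatible i j := ~~ (geq_high (nth [::] V i) (nth [::] V j) &&
                         geq_high (nth [::] W (n.-1 - j)) (nth [::] W (n.-1 - i))).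

Lemma reversal_S_conditions x y : x != y ->
  [&& geq_high (val y) (val x) ==> geq_left (val (r x)) (val (r y)),
      geq_left (val y) (val x) ==> geq_hl (val (r x)) (val (r y)),
      geq_high (val (r y)) (val (r x)) ==> geq_left (val x) (val y) &
      geq_left (val (r y)) (val (r x)) ==> geq_hl (val x) (val y)] =
  compatible (vrank y) (vrank x) && compatible (vrank x) (vrank y).
Proof.
move=> xy; have yx : y != x by rewrite eq_sym.
have rxy : r x != r y by apply: contra xy => /eqP /reversal_inj ->.
have ryx : r y != r x by rewrite eq_sym.
have vxy : vrank x != vrank y by apply: contra xy => /eqP /vrank_inj ->.
rewrite (@reversal_conditions _ _ _ _ (vrank y < vrank x)).
- by rewrite -!nth_vrank !rE /compatible [X in _ && ~~ X]andbC.
- exact: geq_hl_vrank.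
- by rewrite geq_hl_vrank //; lia.
- by rewrite geq_hl_vrank // !rE; have := vrank_lt x; have := vrank_lt y; lia.
- by rewrite geq_hl_vrank // !rE; have := vrank_lt x; have := vrank_lt y; lia.
Qed.

Lemma reversal_in_S_setP : reflect (reversal_compatible V W) (r \in S_set F G).
Proof.
have r_onto : [forall y, exists x, r x == y].
  apply/forallP => y; have /vrank_onto [x ex] : n.-1 - vrank y < n.
    by rewrite nVW; have := vrank_lt y; lia.
  apply/existsP; exists x; apply/eqP/vrank_inj; rewrite rE ex.
  by have := vrank_lt y; rewrite -nVW; lia.
rewrite inE (introT (injectiveP _) reversal_inj) r_onto /=.
apply: (iffP forallP) => [H i j Hi Hj ij | H x].
  have [x ex] := vrank_onto Hj; have [y ey] := vrank_onto Hi.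
  have xy : x != y by apply: contra ij => /eqP xy; rewrite -ex -ey xy.
  by have := implyP (forallP (H x) y) xy; rewrite reversal_S_conditions // ey ex => /andP [].
apply/forallP => y; apply/implyP => xy; rewrite reversal_S_conditions //.
have vxy : vrank x != vrank y by apply: contra xy => /eqP /vrank_inj ->.
by rewrite /compatible !H ?vrank_lt // eq_sym.
Qed.

End Reversal.

Lemma card_S_set : #|S_set F G| = shape_dual (forest_shape F) (forest_shape G).
Proof.
rewrite (shape_dual_eq (forest_shape_hl_verts F 0) (forest_shape_hl_verts G 0)).
have [nVW | nVW] := eqVneq (size V) (size W); last first.
  rewrite (_ : shape_dual _ _ = false); last by apply: contraNF nVW => /shape_dual_size /eqP.
  apply/eqP; rewrite cards_eq0; apply/eqP/setP => s; rewrite in_set0.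
  by apply: contraNF nVW => /S_set_size ->.
have [r rE] := exists_reversal nVW.
rewrite -(sameP (reversal_in_S_setP nVW rE) (shape_dual_vertsP nVW)).
have : S_set F G \subset [set r].
  apply/subsetP => s sS; rewrite inE; apply/eqP/ffunP => x; apply: vrank_inj.
  by rewrite (S_set_vrank sS) rE.
rewrite subset1 => /orP [] /eqP ->; first by rewrite cards1 set11.
by rewrite cards0 in_set0.
Qed.

End ReversalBijection.

Unset Implicit Arguments.
Local Open Scope ring_scope.

Theorem theorem24 (K : fieldType) (b : pforest -> pforest -> K) :
  is_pairing b -> forall F G : pforest, b F G = (#|S_set F G|)%:R.
Proof. by move=> bP F G; rewrite card_S_set pairing_shape_dual. Qed.
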